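(* Let $N\geq 1$. The following two statements are equivalent. (A) (Matheron's conjecture) For every symmetric $N\times N$ matrix $\gamma$ with zero diagonal, $\pi(\gamma)\in\mathrm{cone}(0;\mathscr{V}_N^* )$ if and only if $\sum_{i,j=1}^N\gamma_{i,j}e_ie_j\leq 0$ for every $e\in\mathbb{Z}^N$ with $\sum_{i=1}^Ne_i=1$. (B) A symmetric $N\times N$ matrix $\rho$ with $\rho_{i,i}=1$ for all $i$ is a unit covariance if and only if $\sum_{i,j=1}^N\rho_{i,j}e_ie_j\geq 1$ for every $e\in\mathsf{E}_N$, where $\mathsf{E}_N=\{e\in\mathbb{Z}^N:\ \sum_i u_ie_i=1\text{ for some }u\in\{-1,1\}^N\}$.
   Context: A unit field on $[N]=\{1,\dots,N\}$ is a random vector $X\in\{-1,1\}^N$ with unit covariance $\rho^X_{i,j}=\mathbf{E}[X_iX_j]$; a matrix is a unit covariance if it is of this form. For a random subset $Y\subseteq[N]$, its covariogram is $\gamma^Y_{i,j}=\frac12\mathbb{P}(1_Y(i)\neq 1_Y(j))$; $\mathscr{V}_N$ is the set of all such covariograms. $\pi$ maps a symmetric matrix to its supra-diagonal array $(\gamma_{i,j})_{1\le i<j\le N}$, and $\mathscr{V}_N^*=\pi(\mathscr{V}_N)$. For a convex set $C$ and a point $x$, $\mathrm{cone}(x;C)$ is the smallest convex cone with apex $x$ containing $C$, i.e. $\{x+t(c-x): t\geq 0, c\in C\}$. *)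

From HB Require Import structures.
From mathcomp Require Import all_boot all_order all_algebra.
From mathcomp Require Import reals.
Set Implicit Arguments. Unset Strict Implicit. Unset Printing Implicit Defensive.
Import Order.TTheory GRing.Theory Num.Theory.
Local Open Scope ring_scope.

Definition is_distr (R : realType) (T : finType) (p : {ffun T -> R}) : Prop :=
  (forall x, 0 <= p x) /\ \sum_(x : T) p x = 1.

Definition sgn (R : realType) (b : bool) : R := if b then 1 else -1.

(* Unit covariance: rho_{ij} = E[X_i X_j] for some random vector
   X in {-1,1}^N (given by its law p on {-1,1}^N = {ffun 'I_N -> bool}). *)
Definition unit_covariance (R : realType) (N : nat) (rho : 'M[R]_N) : Prop :=
  exists p : {ffun {ffun 'I_N -> bool} -> R},
    is_distr p /\
    forall i j : 'I_N,
      rho i j = \sum_(x : {ffun 'I_N -> bool}) p x * (sgn R (x i) * sgn R (x j)).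

(* Covariogram of a random subset Y of [N] with law p on {set 'I_N}:
   gamma_{ij} = 1/2 P(1_Y(i) <> 1_Y(j)). *)
Definition covariogram (R : realType) (N : nat) (gamma : 'M[R]_N) : Prop :=
  exists p : {ffun {set 'I_N} -> R},
    is_distr p /\
    forall i j : 'I_N,
      gamma i j = 2^-1 * \sum_(Y : {set 'I_N} | (i \in Y) != (j \in Y)) p Y.

(* pi : supra-diagonal array (gamma_{ij})_{i<j}, as a function on the
   index pairs (i,j) with i < j. *)
Definition supdiag (R : realType) (N : nat) (g : 'M[R]_N)
  : {ffun {p : 'I_N * 'I_N | (nat_of_ord p.1 < nat_of_ord p.2)%N} -> R} :=
  [ffun p => g (val p).1 (val p).2].

Definition VNstar (R : realType) (N : nat)
  (a : {ffun {p : 'I_N * 'I_N | (nat_of_ord p.1 < nat_of_ord p.2)%N} -> R}) : Prop :=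
  exists g : 'M[R]_N, covariogram g /\ a = supdiag g.

Definition cone0 (R : realType) (T : finType) (C : {ffun T -> R} -> Prop)
  (x : {ffun T -> R}) : Prop :=
  exists t : R, 0 <= t /\ exists c, C c /\ forall k, x k = 0 + t * (c k - 0).

Definition qform (R : realType) (N : nat) (a : 'M[R]_N) (e : 'I_N -> int) : R :=
  \sum_(i < N) \sum_(j < N) a i j * (e i)%:~R * (e j)%:~R.

Definition in_EN (N : nat) (e : 'I_N -> int) : Prop :=
  exists u : {ffun 'I_N -> bool},
    \sum_(i < N) (if u i then e i else - e i) = 1%Z.

From HB Require Import structures.
From mathcomp Require Import all_boot all_order all_algebra.
From mathcomp Require Import reals.
From mathcomp Require Import ring lra zify.
Set Implicit Arguments. Unset Strict Implicit. Unset Printing Implicit Defensive.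
Import Order.TTheory GRing.Theory Num.Theory.
Local Open Scope ring_scope.

(* Unit covariances and covariograms correspond under gamma = (1 - rho) / 4,
   and for e with sum 1, qform gamma e = (1 - qform rho e) / 4.  The easy
   halves of (A) and (B) hold outright: qform rho e = E[(sum_i X_i e_i)^2] >= 1
   on E_N, because every signed sum of the entries of e in E_N is odd.

   (A) -> (B).  Switching rho by a sign vector u (rho_ij -> u_i u_j rho_ij)
   turns the inequalities on E_N into Matheron's inequalities, so by (A) the
   switched matrix is a nonnegative multiple of a covariogram.  Switching back,
   rho lies on a ray from the vertex sign_cov u through a point of the hull of
   the sign covariances, for every u.  These points define a Markov chain on
   sign vectors; weighting the ray equation at u by (invariant mass)/(ray
   parameter), the chain terms cancel and rho becomes a convex combination of
   the vertices.

   (B) -> (A).  An integer vector with sum s > 0 splits into s vectors of sum 1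
   whose entries pairwise differ by at most one, so Matheron's inequalities
   bound qform gamma e by s (s - 1) sum_ij |gamma_ij|.  Since vectors in E_N
   have odd, hence nonzero, sum, 1 - gamma / (1 + sum_ij |gamma_ij|) satisfies
   the inequalities of (B); it is a unit covariance, so gamma is a multiple of
   a covariogram. *)

Section InvariantMeasure.
Variables (R : realFieldType) (T : finType).
Implicit Types (S : {set T}) (M : T -> T -> R).

Definition stochastic_on S M :=
  (forall u w, 0 <= M u w) /\ forall u, u \in S -> \sum_(w in S) M u w = 1.

Definition invariant_measure S M (phi : T -> R) :=
  [/\ forall v, 0 <= phi v, 0 < \sum_(v in S) phi v
    & forall w, w \in S -> \sum_(v in S) phi v * M v w = phi w].

Lemma absorbing_invariant_measure S M z : z \in S -> M z z = 1 ->
  stochastic_on S M -> invariant_measure S M (fun v => (v == z)%:R).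
Proof.
move=> Sz Mzz [M0 M1].
have Mz0 w : w \in S :\ z -> M z w = 0.
  have : \sum_(w in S :\ z) M z w = 0.
    by have := M1 z Sz; rewrite (big_setD1 z Sz) /= Mzz -[RHS]addr0 => /addrI.
  by move/psumr_eq0P; apply=> // w' _; apply: M0.
have sum_at_z (F : T -> R) : \sum_(v in S) (v == z)%:R * F v = F z.
  rewrite (big_setD1 z Sz) /= eqxx mul1r big1 ?addr0 // => v.
  by rewrite in_setD1 => /andP [/negbTE -> _]; rewrite mul0r.
split=> [v | | w Sw]; first by rewrite ler0n.
  by have := sum_at_z (fun=> 1); under eq_bigr do rewrite mulr1; move=> ->.
rewrite sum_at_z; have [->|wz] := eqVneq w z; first by rewrite Mzz.
by rewrite Mz0 // in_setD1 wz.
Qed.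

Section Censoring.
Variables (S : {set T}) (M : T -> T -> R) (z : T).
Hypotheses (Sz : z \in S) (Mzz : M z z != 1) (stoM : stochastic_on S M).

(* The chain watched only off z: a visit to z is replaced by the exit from z,
   whose law is M z _ / (1 - M z z). *)
Definition censor u w := M u w + M u z * M z w / (1 - M z z).

Let escape_gt0 : 0 < 1 - M z z.
Proof.
have [M0 M1] := stoM; rewrite subr_gt0 lt_neqAle Mzz -(M1 z Sz) (big_setD1 z Sz).
by rewrite lerDl sumr_ge0.
Qed.

Let sum_off_z u : u \in S -> \sum_(w in S :\ z) M u w = 1 - M u z.
Proof. by move=> Su; rewrite -(stoM.2 u Su) (big_setD1 z Sz) addrC addKr. Qed.

Lemma censor_stochastic : stochastic_on (S :\ z) censor.
Proof.
have [M0 _] := stoM; split=> [u w | u].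
  by rewrite /censor addr_ge0 ?divr_ge0 ?mulr_ge0 // ltW.
rewrite in_setD1 => /andP [_ Su]; rewrite /censor big_split /= -mulr_suml -mulr_sumr.
by rewrite !sum_off_z //; field; rewrite lt0r_neq0.
Qed.

Lemma censor_invariant_extend phi :
  invariant_measure (S :\ z) censor phi ->
  invariant_measure S M
    (fun v => if v == z then (\sum_(v in S :\ z) phi v * M v z) / (1 - M z z)
              else phi v).
Proof.
have [M0 _] := stoM; case=> phi0 phi_pos phi_inv.
set c := _ / _; have c0 : 0 <= c.
  by rewrite divr_ge0 ?(ltW escape_gt0) ?sumr_ge0 // => v _; apply: mulr_ge0.
have off_z (F : T -> R) :
    \sum_(v in S :\ z) (if v == z then c else phi v) * F v = \sum_(v in S :\ z) phi v * F v.
  by apply: eq_bigr => v; rewrite in_setD1 => /andP [/negbTE -> _].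
split=> [v | | w Sw]; first by case: eqP.
  rewrite (big_setD1 z Sz) /= eqxx (eq_bigr phi); last first.
    by move=> v; rewrite in_setD1 => /andP [/negbTE ->].
  by rewrite (lt_le_trans phi_pos) // lerDr.
have escape_neq0 := lt0r_neq0 escape_gt0.
rewrite (big_setD1 z Sz) /= eqxx off_z; have [->|wz] := eqVneq w z.
  by rewrite /c; field.
have Sw' : w \in S :\ z by rewrite in_setD1 wz.
rewrite -(phi_inv w Sw') /censor.
under [in RHS]eq_bigr do rewrite mulrDr.
rewrite big_split /= addrC; congr (_ + _).
by rewrite /c mulrAC !mulr_suml; apply: eq_bigr => v _; field.
Qed.
End Censoring.

Lemma exists_invariant_measure S M : S != set0 -> stochastic_on S M ->
  exists phi, invariant_measure S M phi.
Proof.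
rewrite -card_gt0; move cardS: #|S| => n; elim: n S M cardS => // n IH S M.
move=> cardS _ stoM; have [z Sz] : exists z, z \in S.
  by apply/set0Pn; rewrite -card_gt0 cardS.
have [Mzz|Mzz] := eqVneq (M z z) 1.
  by exists (fun v => (v == z)%:R); apply: absorbing_invariant_measure.
have cardSz : #|S :\ z| = n by rewrite (cardsD1 z S) Sz in cardS; case: cardS.
case: n IH cardS cardSz => [_ _ /eqP | n IH _ cardSz].
  rewrite cards_eq0 => /eqP Sz0; move: Mzz; rewrite -(stoM.2 z Sz).
  by rewrite (big_setD1 z Sz) /= Sz0 big_set0 addr0 eqxx.
have [phi phi_inv] := IH _ (censor M z) cardSz isT (censor_stochastic Sz Mzz stoM).
by eexists; apply: censor_invariant_extend phi_inv.
Qed.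
End InvariantMeasure.

Lemma hull_of_vertex_segments (R : realFieldType) (T : finType) (V : lmodType R)
    (v : T -> V) (x : V) (t : T -> R) (m : T -> T -> R) :
  (0 < #|T|)%N -> (forall u, 0 <= t u) ->
  (forall u w, 0 <= m u w) -> (forall u, \sum_w m u w = 1) ->
  (forall u, x = (1 - t u) *: v u + t u *: \sum_w m u w *: v w) ->
  exists p : T -> R, [/\ forall w, 0 <= p w, \sum_w p w = 1 & x = \sum_w p w *: v w].
Proof.
move=> T0 t0 m0 m1 hx; case: (pickP (fun u => t u == 0)) => [u /eqP tu0 | tn0].
  have at_u (F : T -> V) : \sum_w (w == u)%:R *: F w = F u.
    rewrite (bigD1 u) //= eqxx scale1r big1 ?addr0 // => w /negbTE ->.
    by rewrite scale0r.
  exists (fun w => (w == u)%:R); split=> [w||]; first by rewrite ler0n.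
    by rewrite (bigD1 u) //= eqxx big1 ?addr0 // => w /negbTE ->.
  by rewrite at_u (hx u) tu0 subr0 scale1r scale0r addr0.
have t_gt0 u : 0 < t u by rewrite lt0r t0 andbT; apply/negbT/tn0.
have [phi [phi0 phi_pos phi_inv]] : exists phi, invariant_measure [set: T] m phi.
  apply: exists_invariant_measure; first by rewrite -card_gt0 cardsT.
  by split=> // u _; rewrite -(m1 u); apply: eq_bigl => w; rewrite in_setT.
have {}phi_inv w : \sum_u phi u * m u w = phi w.
  by rewrite -(phi_inv w (in_setT w)); apply: eq_bigl => u; rewrite in_setT.
have {}phi_pos : 0 < \sum_u phi u by move: phi_pos; under eq_bigl do rewrite in_setT.
have phit_ge0 u : 0 <= phi u / t u by rewrite divr_ge0 ?phi0 ?ltW.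
set Z := \sum_u phi u / t u.
have Z_gt0 : 0 < Z.
  rewrite lt0r sumr_ge0 ?andbT //.
  apply: contraTneq phi_pos => Z0; rewrite -leNgt le_eqVlt big1 ?eqxx // => u _.
  have /eqP : phi u / t u = 0 := psumr_eq0P (fun u _ => phit_ge0 u) Z0 isT.
  by rewrite mulf_eq0 invr_eq0 (gt_eqF (t_gt0 u)) orbF => /eqP.
have hull : Z *: x = \sum_u (phi u / t u) *: v u.
  transitivity (\sum_u ((phi u / t u) *: v u - phi u *: v u
                        + phi u *: \sum_w m u w *: v w)).
    rewrite scaler_suml; apply: eq_bigr => u _; rewrite {1}(hx u) scalerDr !scalerA.
    have tu0 : t u != 0 := lt0r_neq0 (t_gt0 u).
    by rewrite -scalerBl; congr (_ *: _ + _ *: _); field.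
  rewrite big_split sumrB /= [X in _ + X](_ : _ = \sum_u phi u *: v u) ?subrK //.
  under eq_bigr do rewrite scaler_sumr; rewrite exchange_big /=.
  apply: eq_bigr => w _; rewrite -phi_inv scaler_suml.
  by apply: eq_bigr => u _; rewrite scalerA.
exists (fun w => phi w / t w / Z); split=> [w||].
- by rewrite divr_ge0 ?phit_ge0 ?ltW.
- by rewrite -mulr_suml mulfV ?gt_eqF.
- under eq_bigr do rewrite mulrC -scalerA.
  by rewrite -scaler_sumr -hull scalerA mulVf ?gt_eqF ?scale1r.
Qed.

Lemma exists_card_between (T : finType) (A B : {set T}) (k : nat) :
  A \subset B -> (#|A| <= k <= #|B|)%N ->
  exists C : {set T}, [/\ A \subset C, C \subset B & #|C| = k].
Proof.
move=> sAB /andP [leAk]; rewrite -(subnKC leAk); move: (k - #|A|)%N => n.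
elim: n A sAB {leAk} => [|n IH] A sAB leAB; first by exists A; rewrite addn0.
have [x /setDP [Bx Ax]] : exists x, x \in B :\: A.
  by apply/set0Pn; rewrite -card_gt0 cardsD (setIidPr sAB); lia.
have sxAB : x |: A \subset B by rewrite subUset sub1set Bx.
have [|C [sxAC sCB cardC]] := IH (x |: A) sxAB; first by rewrite cardsU1 Ax /=; lia.
exists C; split=> //; first exact: subset_trans (subsetUr [set x] A) sxAC.
by rewrite cardC cardsU1 Ax /=; lia.
Qed.

Lemma indicator_split N (s : nat) (m : int) (r : 'I_N -> int) :
  (forall i, 0 <= r i <= s.+1%:Z) -> \sum_i r i = s.+1%:Z * m ->
  exists c : 'I_N -> int,
    [/\ forall i, 0 <= c i <= 1, forall i, 0 <= r i - c i <= s%:Z & \sum_i c i = m].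
Proof.
move=> r_bnd sum_r.
set A := [set i | r i == s.+1%:Z]; set B := [set i | 0 < r i].
have sAB : A \subset B by apply/subsetP => i; rewrite !inE => /eqP ->.
have sumA : #|A|%:Z * s.+1%:Z <= s.+1%:Z * m.
  rewrite -sum_r -[#|A|%:Z]natz mulr_natl -sumr_const big_mkcond /=.
  apply: ler_sum => i _; rewrite inE; case: eqP => [-> //|_].
  by case/andP: (r_bnd i).
have sumB : s.+1%:Z * m <= #|B|%:Z * s.+1%:Z.
  rewrite -sum_r -[#|B|%:Z]natz mulr_natl -sumr_const big_mkcond [X in _ <= X]big_mkcond /=.
  apply: ler_sum => i _; rewrite inE; case: ifP => [_|/negbT]; first by case/andP: (r_bnd i).
  by rewrite -leNgt.
have [k mk] : exists k : nat, m = k%:Z.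
  exists `|m|%N; rewrite gez0_abs //; nia.
have [|C [sAC sCB cardC]] := @exists_card_between _ A B k sAB; first by apply/andP; split; nia.
exists (fun i => if i \in C then 1 else 0); split=> [i | i |].
- by case: (i \in C).
- case/andP: (r_bnd i) => r0 rs; case Ci: (i \in C).
    by move: (subsetP sCB i Ci); rewrite inE => ?; lia.
  have : i \notin A by apply: contraFN Ci; apply: (subsetP sAC).
  by rewrite inE => /eqP ?; lia.
- by rewrite -big_mkcond sumr_const mk -cardC natz.
Qed.

Lemma balanced_decomposition N (s : nat) (a r : 'I_N -> int) :
  (forall i, 0 <= r i <= s%:Z) -> \sum_i (s%:Z * a i + r i) = s%:Z ->
  exists c : 'I_s -> 'I_N -> int,
    [/\ forall k i, 0 <= c k i <= 1, forall k, \sum_i (a i + c k i) = 1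
      & forall i, \sum_k c k i = r i].
Proof.
elim: s r => [|s IH] r r_bnd sum_e.
  exists (fun _ _ => 0); split=> [[]|[]|i] //.
  by rewrite big_ord0; case/andP: (r_bnd i) => ? ?; lia.
rewrite big_split /= -mulr_sumr in sum_e.
have sum_r : \sum_i r i = s.+1%:Z * (1 - \sum_i a i).
  by rewrite mulrBr mulr1 -[in X in X - _]sum_e; ring.
have [c0 [c0_bnd rc0_bnd sum_c0]] := indicator_split r_bnd sum_r.
have [|c [c_bnd sum_c sum_k]] := IH (fun i => r i - c0 i) rc0_bnd.
  rewrite big_split /= -mulr_sumr sumrB sum_r sum_c0 -addn1 PoszD; ring.
exists (fun k => if unlift ord0 k is Some k' then c k' else c0); split=> [k i|k|i].
- by case: (unlift ord0 k).
- by case: (unlift ord0 k) => [k'|]; rewrite ?sum_c // big_split /= sum_c0 addrC subrK.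
- rewrite big_ord_recl unlift_none; under eq_bigr do rewrite liftK.
  by rewrite sum_k addrC subrK.
Qed.

Section QuadraticBound.
Variables (R : realDomainType) (N : nat) (g : 'M[R]_N).
Implicit Types e f h : 'I_N -> int.

Definition bform e f : R := \sum_i \sum_j g i j * (e i)%:~R * (f j)%:~R.

Definition abs_entry_sum : R := \sum_i \sum_j `|g i j|.

Lemma bform_sum (I : finType) (f h : I -> 'I_N -> int) :
  bform (fun i => \sum_k f k i) (fun j => \sum_l h l j)
  = \sum_k \sum_l bform (f k) (h l).
Proof.
transitivity (\sum_i \sum_j \sum_k \sum_l g i j * (f k i)%:~R * (h l j)%:~R).
  apply: eq_bigr => i _; apply: eq_bigr => j _.
  rewrite !rmorph_sum -mulrA big_distrlr mulr_sumr; apply: eq_bigr => k _.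
  by rewrite mulr_sumr; apply: eq_bigr => l _; rewrite mulrA.
under eq_bigr do rewrite exchange_big /=.
under eq_bigr do under eq_bigr do rewrite exchange_big /=.
by rewrite exchange_big; under eq_bigr do rewrite exchange_big.
Qed.

Lemma bformBl e f h : bform (fun i => e i - f i) h = bform e h - bform f h.
Proof.
rewrite /bform -sumrB; apply: eq_bigr => i _; rewrite -sumrB.
by apply: eq_bigr => j _; rewrite intrB; ring.
Qed.

Lemma bformBr e f h : bform e (fun j => f j - h j) = bform e f - bform e h.
Proof.
rewrite /bform -sumrB; apply: eq_bigr => i _; rewrite -sumrB.
by apply: eq_bigr => j _; rewrite intrB; ring.
Qed.

Lemma bform_norm_le e f : (forall i, `|e i| <= 1) -> (forall j, `|f j| <= 1) ->
  `|bform e f| <= abs_entry_sum.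
Proof.
move=> e1 f1; apply: (le_trans (ler_norm_sum _ _ _)); apply: ler_sum => i _.
apply: (le_trans (ler_norm_sum _ _ _)); apply: ler_sum => j _.
rewrite !normrM -[leRHS]mulr1 -mulrA ler_wpM2l // -[leRHS]mulr1.
by rewrite ler_pM // -intr_norm lerz1.
Qed.

Hypothesis gsym : g^T = g.

Lemma bformC e f : bform e f = bform f e.
Proof.
rewrite /bform exchange_big; apply: eq_bigr => i _; apply: eq_bigr => j _.
by rewrite -[in RHS]gsym mxE; ring.
Qed.

Lemma bform_subr e f :
  bform (fun i => e i - f i) (fun i => e i - f i) = bform e e + bform f f - 2 * bform e f.
Proof. by rewrite bformBl !bformBr (bformC f e); ring. Qed.

Lemma abs_entry_sum_ge0 : 0 <= abs_entry_sum.
Proof. by apply: sumr_ge0 => i _; apply: sumr_ge0. Qed.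

Hypothesis bform_aff_le0 : forall f, \sum_i f i = 1 -> bform f f <= 0.

Lemma bform_adjacent_le f h : \sum_i f i = 1 -> \sum_i h i = 1 ->
  (forall i, `|f i - h i| <= 1) -> bform f h <= abs_entry_sum.
Proof.
move=> /bform_aff_le0 qf /bform_aff_le0 qh fh1.
have := bform_norm_le fh1 fh1; rewrite bform_subr ler_norml => /andP [lb _].
by have := abs_entry_sum_ge0; lra.
Qed.

Lemma bform_self_le (n : nat) e : \sum_i e i = n.+1%:Z ->
  bform e e <= n.+1%:R * n%:R * abs_entry_sum.
Proof.
move=> sum_e; set s := n.+1.
pose a i := (e i %/ s)%Z; pose r i := (e i %% s)%Z.
have e_split i : e i = a i *+ s + r i by rewrite -mulr_natr natz -divz_eq.
have r_bnd i : 0 <= r i <= s%:Z by rewrite modz_ge0 //= ltW // ltz_pmod.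
have [|c [c_bnd sum_c sum_k]] := balanced_decomposition (a := a) r_bnd.
  by rewrite -[RHS]sum_e; apply: eq_bigr => i _; rewrite e_split -mulr_natl natz.
(* e splits into the n.+1 vectors f k of sum 1, pairwise within one entrywise. *)
pose f k i := a i + c k i.
have sum_f k : \sum_i f k i = 1 := sum_c k.
have -> : bform e e = bform (fun i => \sum_k f k i) (fun j => \sum_k f k j).
  apply: eq_bigr => i _; apply: eq_bigr => j _.
  by rewrite /f !big_split /= !sum_k !sumr_const !card_ord -!e_split.
rewrite bform_sum; apply: le_trans (_ : _ <= \sum_(k < s) n%:R * abs_entry_sum) _.
  apply: ler_sum => k _; rewrite (bigD1 k) //= -[leRHS]add0r lerD ?bform_aff_le0 ?sum_f //.
  apply: le_trans (_ : _ <= \sum_(l | l != k) abs_entry_sum) _.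
    apply: ler_sum => l _; apply: bform_adjacent_le; rewrite ?sum_f // => i.
    rewrite /f opprD addrACA subrr add0r.
    by case/andP: (c_bnd k i) => ? ?; case/andP: (c_bnd l i) => ? ?; rewrite ler_norml; lia.
  by rewrite sumr_const cardC1 card_ord mulr_natl.
by rewrite sumr_const card_ord -mulrA [leRHS]mulr_natl.
Qed.

End QuadraticBound.

Section UnitCovariances.
Variables (R : realType) (N : nat).
Local Notation sgn := (sgn R).
Local Notation signs := {ffun 'I_N -> bool}.
Implicit Types (rho gamma g : 'M[R]_N) (x u w : signs) (e : 'I_N -> int).

Lemma sgn_mul b c : sgn b * sgn c = sgn (b == c).
Proof. by case: b; case: c; rewrite /sgn /=; ring. Qed.

Lemma sgn_mulxx b : sgn b * sgn b = 1.
Proof. by rewrite sgn_mul eqxx. Qed.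

Definition sign_cov x : 'M[R]_N := \matrix_(i, j) (sgn (x i) * sgn (x j)).

Lemma unit_covariance_hull rho :
  unit_covariance rho <-> exists p, is_distr p /\ rho = \sum_x p x *: sign_cov x.
Proof.
have entry (p : {ffun signs -> R}) i j :
    (\sum_x p x *: sign_cov x) i j = \sum_x p x * (sgn (x i) * sgn (x j)).
  by rewrite summxE; apply: eq_bigr => x _; rewrite !mxE.
split=> [[p [p_distr rhoE]] | [p [p_distr ->]]]; exists p; split=> //.
by apply/matrixP => i j; rewrite entry rhoE.
Qed.

Definition flip u x : signs := [ffun k => u k == x k].

Lemma flipK u : involutive (flip u).
Proof. by move=> x; apply/ffunP => k; rewrite !ffunE; case: (u k); case: (x k). Qed.

Definition switch u rho := \matrix_(i, j) (sgn (u i) * sgn (u j) * rho i j).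

Lemma switch_unit_covariance u rho : unit_covariance rho -> unit_covariance (switch u rho).
Proof.
case=> p [[p0 p1] rhoE]; exists [ffun x => p (flip u x)]; split; first split.
- by move=> x; rewrite ffunE.
- rewrite -[RHS]p1 (reindex_inj (can_inj (flipK u))).
  by apply: eq_bigr => x _; rewrite ffunE ?flipK.
move=> i j; rewrite mxE rhoE mulr_sumr (reindex_inj (can_inj (flipK u))).
apply: eq_bigr => x _; rewrite !ffunE -!sgn_mul.
set a := sgn (u i); set b := sgn (u j).
transitivity ((a * a) * (b * b) * (p (flip u x) * (sgn (x i) * sgn (x j)))); first ring.
by rewrite !sgn_mulxx !mul1r.
Qed.

Lemma sum_over_sets (F : signs -> R) :
  \sum_x F x = \sum_(Y : {set 'I_N}) F [ffun i => i \in Y].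
Proof.
rewrite (reindex (fun Y : {set 'I_N} => [ffun i => i \in Y])) //.
exists (fun x => [set i | x i]) => [Y _ | x _].
  by apply/setP => i; rewrite inE ffunE.
by apply/ffunP => i; rewrite ffunE inE.
Qed.

Lemma sum_sgn_separated (p : {set 'I_N} -> R) i j : \sum_(Y : {set 'I_N}) p Y = 1 ->
  \sum_(Y : {set 'I_N}) p Y * (sgn (i \in Y) * sgn (j \in Y)) =
  1 - 4 * (2^-1 * \sum_(Y : {set 'I_N} | (i \in Y) != (j \in Y)) p Y).
Proof.
move=> p1; rewrite -[X in X - _]p1 mulrA (_ : 4 * 2^-1 = 2 :> R); last by field.
rewrite mulr_sumr [X in _ - X]big_mkcond -sumrB; apply: eq_bigr => Y _ /=.
by case: (i \in Y); case: (j \in Y); rewrite /sgn /=; ring.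
Qed.

Lemma covariogram_unit_covariance g :
  covariogram g <-> unit_covariance (\matrix_(i, j) (1 - 4 * g i j)).
Proof.
split=> [[p [[p0 p1] gE]] | [p [[p0 p1] rhoE]]].
  have set_ofK (Y : {set 'I_N}) : [set i | [ffun k => k \in Y] i] = Y.
    by apply/setP => i; rewrite inE ffunE.
  exists [ffun x : signs => p [set i | x i]]; split; first split.
  - by move=> x; rewrite ffunE.
  - by rewrite sum_over_sets -[RHS]p1; apply: eq_bigr => Y _; rewrite ffunE set_ofK.
  move=> i j; rewrite mxE gE -sum_sgn_separated // sum_over_sets.
  by apply: eq_bigr => Y _; rewrite !ffunE set_ofK.
pose q := [ffun Y : {set 'I_N} => p [ffun i => i \in Y]].
have q1 : \sum_(Y : {set 'I_N}) q Y = 1.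
  by rewrite -[RHS]p1 sum_over_sets; apply: eq_bigr => Y _; rewrite ffunE.
exists q; split=> [|i j]; first by split=> // Y; rewrite ffunE.
have := rhoE i j; rewrite mxE sum_over_sets.
rewrite (eq_bigr (fun Y => q Y * (sgn (i \in Y) * sgn (j \in Y)))); last first.
  by move=> Y _; rewrite !ffunE.
by rewrite sum_sgn_separated //; lra.
Qed.

Lemma covariogram_diag g : covariogram g -> forall i, g i i = 0.
Proof. by case=> p [_ gE] i; rewrite gE big_pred0 ?mulr0 // => Y; rewrite eqxx. Qed.

Lemma covariogram_sym g : covariogram g -> g^T = g.
Proof.
case=> p [_ gE]; apply/matrixP => i j; rewrite mxE !gE.
by congr (_ * _); apply: eq_bigl => Y; rewrite eq_sym.
Qed.

Lemma cone_covariogramsP gamma : gamma^T = gamma -> (forall i, gamma i i = 0) ->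
  cone0 (@VNstar R N) (supdiag gamma) <->
  exists t, 0 <= t /\ exists g, covariogram g /\ forall i j, gamma i j = t * g i j.
Proof.
move=> gammaC gamma0; split=> [[t [t0 [_ [[g [gcov ->]] gE]]]] | [t [t0 [g [gcov gE]]]]].
  exists t; split=> //; exists g; split=> // i j.
  have gC := covariogram_sym gcov; have g0 := covariogram_diag gcov.
  have upper (k l : 'I_N) (lt_kl : (k < l)%N) : gamma k l = t * g k l.
    by have := gE (exist _ (k, l) lt_kl); rewrite !ffunE add0r subr0.
  case: (ltngtP i j) => [/upper // | /upper gE_ji | /val_inj ->].
    by rewrite -[gamma]gammaC -[g]gC !mxE.
  by rewrite gamma0 g0 mulr0.
exists t; split=> //; exists (supdiag g); split; first by exists g.
by move=> k; rewrite !ffunE gE add0r subr0.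
Qed.

Lemma qform_affine (a b : 'M[R]_N) (c d : R) e : (forall i j, b i j = c + d * a i j) ->
  qform b e = c * ((\sum_i e i)%:~R) ^+ 2 + d * qform a e.
Proof.
move=> bE; rewrite /qform rmorph_sum expr2 big_distrlr mulr_sumr mulr_sumr -big_split /=.
apply: eq_bigr => i _; rewrite mulr_sumr mulr_sumr -big_split /=.
by apply: eq_bigr => j _; rewrite bE; ring.
Qed.

Lemma qform_switch u (a : 'M[R]_N) e :
  qform (switch u a) e = qform a (fun i => if u i then e i else - e i).
Proof.
apply: eq_bigr => i _; apply: eq_bigr => j _; rewrite mxE.
by case: (u i); case: (u j); rewrite /sgn /= ?intrN; ring.
Qed.

Lemma qform_oppv (a : 'M[R]_N) e : qform a (fun i => - e i) = qform a e.
Proof. by apply: eq_bigr => i _; apply: eq_bigr => j _; rewrite !intrN; ring. Qed.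

Lemma in_EN_signed_sum_neq0 e x : in_EN e -> \sum_i (if x i then e i else - e i) != 0.
Proof.
have signedE y : \sum_i (if y i then e i else - e i)
                 = 2 * \sum_i (if y i then e i else 0) - \sum_i e i.
  by rewrite mulr_sumr -sumrB; apply: eq_bigr => i _; case: (y i); ring.
by case=> u; rewrite !signedE => ?; apply/eqP => ?; lia.
Qed.

Lemma unit_covariance_qform_ge1 rho e :
  unit_covariance rho -> in_EN e -> 1 <= qform rho e.
Proof.
case=> p [[p0 p1] rhoE] EN_e.
have -> : qform rho e = \sum_x p x * ((\sum_i (if x i then e i else - e i))%:~R) ^+ 2.
  rewrite /qform; under eq_bigr do under eq_bigr do rewrite rhoE !mulr_suml.
  under eq_bigr do rewrite exchange_big /=.
  rewrite exchange_big /=; apply: eq_bigr => x _; rewrite rmorph_sum expr2 big_distrlr.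
  rewrite mulr_sumr; apply: eq_bigr => i _; rewrite mulr_sumr; apply: eq_bigr => j _.
  by case: (x i); case: (x j); rewrite /sgn /= ?intrN; ring.
rewrite -[leLHS]p1 ler_sum // => x _; rewrite -[leLHS]mulr1 ler_wpM2l //.
rewrite -rmorphXn /= ler1z expr2; move: (in_EN_signed_sum_neq0 x EN_e).
by set s := \sum_i _; case: (ltgtP s 0) => //= s0 _; nia.
Qed.
End UnitCovariances.

Arguments sign_cov {R N} x.

Section Equivalence.
Variables (R : realType) (N : nat).
Local Notation signs := {ffun 'I_N -> bool}.

Definition matheron_conjecture : Prop :=
  forall gamma : 'M[R]_N,
     gamma^T = gamma -> (forall i, gamma i i = 0) ->
     (cone0 (@VNstar R N) (supdiag gamma) <->
      (forall e : 'I_N -> int, \sum_(i < N) e i = 1%Z -> qform gamma e <= 0)).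

Definition unit_covariance_criterion : Prop :=
  forall rho : 'M[R]_N,
     rho^T = rho -> (forall i, rho i i = 1) ->
     (unit_covariance rho <->
      (forall e : 'I_N -> int, in_EN e -> 1 <= qform rho e)).

Lemma qform_scale (a b : 'M[R]_N) (t : R) e :
  (forall i j, b i j = t * a i j) -> qform b e = t * qform a e.
Proof.
move=> bE; rewrite (qform_affine (a := a) (c := 0) (d := t)) ?mul0r ?add0r //.
by move=> i j; rewrite add0r.
Qed.

Lemma covariogram_qform_le0 (g : 'M[R]_N) e :
  covariogram g -> \sum_i e i = 1%Z -> qform g e <= 0.
Proof.
move=> /covariogram_unit_covariance /unit_covariance_qform_ge1 rho_ge1 sum_e.
have EN_e : in_EN e.
  by exists [ffun => true]; rewrite -[RHS]sum_e; apply: eq_bigr => i _; rewrite ffunE.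
have := rho_ge1 e EN_e.
rewrite (qform_affine (a := g) (c := 1) (d := -4)) => [|i j]; last by rewrite mxE mulNr.
by rewrite sum_e expr1n mul1r; lra.
Qed.

Lemma cone_covariograms_qform_le0 (gamma : 'M[R]_N) :
  gamma^T = gamma -> (forall i, gamma i i = 0) -> cone0 (@VNstar R N) (supdiag gamma) ->
  forall e : 'I_N -> int, \sum_i e i = 1%Z -> qform gamma e <= 0.
Proof.
move=> gammaC gamma0 /(cone_covariogramsP gammaC gamma0) [t [t0 [g [gcov gammaE]]]] e sum_e.
by rewrite (qform_scale _ gammaE) mulr_ge0_le0 // covariogram_qform_le0.
Qed.

Section VertexSegments.
Hypothesis matheron : matheron_conjecture.
Variable rho : 'M[R]_N.
Hypotheses (rhoC : rho^T = rho) (rho1 : forall i, rho i i = 1)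
  (rho_ge1 : forall e, in_EN e -> 1 <= qform rho e).
Variable u : signs.

(* gu is the covariogram-side image of switch u rho; by (A) it is t times a
   covariogram, which is what puts rho on a ray from sign_cov u into the hull. *)
Lemma unit_covariance_segment : exists t (m : {ffun signs -> R}),
  [/\ 0 <= t, is_distr m & rho = (1 - t) *: sign_cov u + t *: \sum_w m w *: sign_cov w].
Proof.
pose gu := \matrix_(i, j) (4^-1 + (- 4^-1) * switch u rho i j).
have rhoCE i j : rho j i = rho i j by rewrite -[in RHS]rhoC mxE.
have guC : gu^T = gu.
  by apply/matrixP => i j; rewrite !mxE rhoCE [sgn R (u j) * _]mulrC.
have gu0 i : gu i i = 0 by rewrite !mxE rho1 mulr1 sgn_mulxx; field.
have gu_le0 e : \sum_i e i = 1%Z -> qform gu e <= 0.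
  move=> sum_e; rewrite (qform_affine (a := switch u rho) (c := 4^-1) (d := - 4^-1)).
    2: by move=> i j; rewrite mxE.
  rewrite qform_switch sum_e expr1n mulr1.
  have EN_ue : in_EN (fun i => if u i then e i else - e i).
    by exists u; rewrite -[RHS]sum_e; apply: eq_bigr => i _; case: (u i); rewrite ?opprK.
  by have := rho_ge1 EN_ue; lra.
have [t [t0 [g [gcov guE]]]] := (cone_covariogramsP guC gu0).1 ((matheron guC gu0).2 gu_le0).
have /(switch_unit_covariance u)/unit_covariance_hull [m [m_distr mE]] :=
  (covariogram_unit_covariance g).1 gcov.
exists t, m; split=> //; apply/matrixP => i j; rewrite -mE !mxE.
have := guE i j; rewrite !mxE; set a := sgn R (u i) * sgn R (u j) => guE_ij.
have a2 : a * a = 1 by rewrite mulrACA !sgn_mulxx mulr1.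
transitivity (a * a * rho i j); first by rewrite a2 mul1r.
have -> : t * (a * (1 - 4 * g i j)) = t * a - 4 * a * (t * g i j) by ring.
by rewrite -guE_ij; field.
Qed.
End VertexSegments.

Lemma unit_covariance_criterion_of_matheron :
  matheron_conjecture -> unit_covariance_criterion.
Proof.
move=> matheron rho rhoC rho1; split=> [uc_rho e | rho_ge1].
  exact: unit_covariance_qform_ge1.
have /fin_all_exists [t /fin_all_exists [m segment]] :=
  unit_covariance_segment matheron rhoC rho1 rho_ge1.
have [|||||p [p0 p1 rhoE]] :=
  hull_of_vertex_segments (v := @sign_cov R N) (x := rho) (t := t) (m := fun u => m u).
- by apply/card_gt0P; exists [ffun => true].
- by move=> u; have [] := segment u.
- by move=> u w; have [_ [m0 _] _] := segment u.
- by move=> u; have [_ [_ m1] _] := segment u.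
- by move=> u; have [_ _ ->] := segment u.
apply/unit_covariance_hull; exists [ffun w => p w]; split; first split.
- by move=> w; rewrite ffunE.
- by under eq_bigr do rewrite ffunE.
- by under eq_bigr do rewrite ffunE.
Qed.

Lemma qform_le_of_in_EN (gamma : 'M[R]_N) e : gamma^T = gamma ->
  (forall f : 'I_N -> int, \sum_i f i = 1%Z -> qform gamma f <= 0) -> in_EN e ->
  exists n : nat, qform gamma e <= n.+1%:R * n%:R * abs_entry_sum gamma
                  /\ (\sum_i e i)%:~R ^+ 2 = n.+1%:R ^+ 2 :> R.
Proof.
move=> gammaC gamma_le0 /(in_EN_signed_sum_neq0 [ffun => true]).
under eq_bigr do rewrite ffunE /=.
case sum_e: (\sum_i e i) => [[|n]|n] // _; exists n; split=> //.
- exact: (bform_self_le gammaC gamma_le0 sum_e).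
- rewrite -qform_oppv; apply: (bform_self_le gammaC gamma_le0).
  by rewrite sumrN sum_e NegzE opprK.
- by rewrite NegzE intrN sqrrN.
Qed.

Lemma matheron_of_unit_covariance_criterion :
  unit_covariance_criterion -> matheron_conjecture.
Proof.
move=> criterion gamma gammaC gamma0; split; first exact: cone_covariograms_qform_le0.
move=> gamma_le0; pose D := 1 + abs_entry_sum gamma.
have D_gt0 : 0 < D by rewrite /D; have := abs_entry_sum_ge0 gamma; lra.
pose g := \matrix_(i, j) ((4 * D)^-1 * gamma i j).
pose rho := \matrix_(i, j) (1 - 4 * g i j).
have rhoC : rho^T = rho.
  by apply/matrixP => i j; rewrite !mxE -[in LHS]gammaC mxE.
have rho1 i : rho i i = 1 by rewrite !mxE gamma0 mulr0 mulr0 subr0.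
have rho_ge1 e : in_EN e -> 1 <= qform rho e.
  move=> /(qform_le_of_in_EN gammaC gamma_le0) [n [q_le sq_sum]].
  rewrite (qform_affine (a := g) (c := 1) (d := -4)) => [|i j]; last by rewrite mxE mulNr.
  rewrite (qform_scale (a := gamma) (t := (4 * D)^-1)) => [|i j]; last by rewrite mxE.
  rewrite mul1r sq_sum; set q := qform gamma e.
  have q_le' : q <= n.+1%:R * n%:R * D.
    by apply: (le_trans q_le); apply: ler_wpM2l; rewrite ?mulr_ge0 // /D lerDr.
  have : 4 * ((4 * D)^-1 * q) <= n.+1%:R * n%:R.
    by rewrite invfM !mulrA mulfV ?pnatr_eq0 // mul1r mulrC ler_pdivrMr //.
  move: ((4 * D)^-1 * q) => z; rewrite -natr1.
  by have : 0 <= n%:R :> R by []; nra.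
have /covariogram_unit_covariance gcov := (criterion rho rhoC rho1).2 rho_ge1.
apply/(cone_covariogramsP gammaC gamma0); exists (4 * D); split; first lra.
by exists g; split=> // i j; rewrite mxE mulrA mulfV ?mul1r // gt_eqF ?mulr_gt0.
Qed.
End Equivalence.

Theorem theorem2 (R : realType) (N : nat) (hN : (1 <= N)%N) :
  (forall gamma : 'M[R]_N,
     gamma^T = gamma -> (forall i, gamma i i = 0) ->
     (cone0 (@VNstar R N) (supdiag gamma) <->
      (forall e : 'I_N -> int, \sum_(i < N) e i = 1%Z -> qform gamma e <= 0)))
  <->
  (forall rho : 'M[R]_N,
     rho^T = rho -> (forall i, rho i i = 1) ->
     (unit_covariance rho <->
      (forall e : 'I_N -> int, in_EN e -> 1 <= qform rho e))).
Proof.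
split; first exact: (@unit_covariance_criterion_of_matheron R N).
exact: (@matheron_of_unit_covariance_criterion R N).
Qed.
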